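(* Let $Q$ be a finite connected quandle isomorphic to a generalized Alexander quandle $\mathrm{GAlex}(G_0,f)$ for some finite group $G_0$ and $f\in\mathrm{Aut}(G_0)$. Let $e\in Q$, $G=\mathrm{Inn}(Q)$, $x=R_e$. Then for every oriented knot $K$, $$\Psi^e_Q(K)=(\pi_e)_*\big(P^x_G(K)\big),$$ where $(\pi_e)_*:\mathbb{Z}[C(x)\cap G']\to\mathbb{Z}[\mathrm{inn}^{-1}(R_e)]$ is the $\mathbb{Z}$-linear map induced by the bijection $\pi_e(g)=eg$. Consequently $P^x_G$ and $\Psi^e_Q$ distinguish the same pairs of knots.
   Context: A quandle is a set with operation $*$ satisfying $a*a=a$; unique right division; $(a*b)*c=(a*c)*(b*c)$. $R_a(y)=y*a$; $\mathrm{Inn}(Q)$ is generated by the $R_a$ and acts on $Q$ on the right ($ag$ is the image of $a$ under $g$); connected means transitive; $\mathrm{inn}(a)=R_a$. $\mathrm{GAlex}(H,f)$ is the quandle on a group $H$ with $a*b=f(ab^{-1})b$. $G'$ is the derived subgroup, $C(x)$ the centralizer of $x$ in $G$; $\pi_e:C(x)\cap G'\to\mathrm{inn}^{-1}(R_e)$ is a bijection in this setting. Colorings: arcs of an oriented diagram get colors in $Q$ so that at each crossing with over-arc color $y$ and incoming under-arc color $a$ the outgoing under-arc gets $a*y$. For a $1$-tangle $T$ (oriented arc in a 3-ball up to isotopy rel boundary, drawn top to bottom, top arc $b_0$, bottom arc $b_1$) with closure $K$, $\Psi^e_Q(K)=\sum C(b_1)\in\mathbb{Z}[\mathrm{inn}^{-1}(R_e)]$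 over colorings $C$ of $T$ with $C(b_0)=e$. Eisermann's knot coloring polynomial: with $\pi_K$ the fundamental group of the knot complement, $m_K$ a meridian and $l_K$ the corresponding longitude (Eisermann's conventions), $P^x_G(K)=\sum_\rho\rho(l_K)$, summed over all homomorphisms $\rho:\pi_K\to G$ with $\rho(m_K)=x$; the values $\rho(l_K)$ lie in $C(x)\cap G'$, so $P^x_G(K)\in\mathbb{Z}[C(x)\cap G']$. *)

From HB Require Import structures.
From mathcomp Require Import all_boot all_algebra all_fingroup all_solvable.
Set Implicit Arguments.
Unset Strict Implicit.
Unset Printing Implicit Defensive.

(* a*a = a ; right multiplication injective (= bijective, i.e. unique right
   division, since the carrier is finite) ; right self-distributivity. *)
Record quandle := Quandle {
  qcar :> finType;
  qop : qcar -> qcar -> qcar;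
  qidem : forall a, qop a a = a;
  qinj : forall b, injective (fun a => qop a b);
  qdist : forall a b c, qop (qop a b) c = qop (qop a c) (qop b c) }.

Local Open Scope group_scope.

Section QuandleDefs.
Variable Q : quandle.

(* R_a(y) = y * a, as a permutation of Q (mathcomp permutations act on the
   right: (s * t) y = t (s y)). *)
Definition Rq (a : Q) : {perm Q} := perm (@qinj Q a).

Definition Inn : {group {perm Q}} := <<[set Rq a | a : Q]>>%G.

Definition qrdiv (a b : Q) : Q := (Rq b)^-1 a.

Definition qconnected : bool := [transitive Inn, on [set: Q] | 'P].
End QuandleDefs.

(* A braid word on n.+1 strands (positions 0..n, read top to bottom):
   a crossing (i, true) exchanges positions i and i+1, the strand coming from
   position i passing OVER (to position i+1); (i, false) is its inverse: the
   strand coming from position i+1 passes over (to position i). *)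
Definition crossing := (nat * bool)%type.

Definition valid_braid (n : nat) (w : seq crossing) : bool :=
  all (fun s => s.1 < n) w.

Definition swap_pos (i k : nat) : nat :=
  if k == i then i.+1 else if k == i.+1 then i else k.

(* the strand entering at top position k leaves at bottom position bperm w k *)
Definition bperm (w : seq crossing) (k : nat) : nat :=
  foldl (fun k s => swap_pos s.1 k) k w.

Definition is_knot_braid (n : nat) (w : seq crossing) : bool :=
  valid_braid n w && uniq [seq iter k (bperm w) 0 | k <- iota 0 n.+1].

(* over-arc colour y, incoming under-arc colour a: outgoing a * y, resp. a / y
   for the crossing of the opposite handedness (so that Reidemeister II holds). *)
Definition qstep (Q : quandle) (c : nat -> Q) (s : crossing) : nat -> Q :=
  let i := s.1 in
  if s.2 then fun k => if k == i then qop (c i.+1) (c i)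
                       else if k == i.+1 then c i else c k
  else fun k => if k == i then c i.+1
                else if k == i.+1 then qrdiv (c i) (c i.+1) else c k.

Definition qrun (Q : quandle) (w : seq crossing) (c : nat -> Q) : nat -> Q :=
  foldl (@qstep Q) c w.

(* Coefficient of q in Psi^e_Q(K), K = closure of w; the 1-tangle is obtained by
   cutting the closing arc at position 0: top arc b_0 = top of position 0,
   bottom arc b_1 = bottom of position 0. *)
Definition Psi_coeff (Q : quandle) (n : nat) (w : seq crossing) (e q : Q) : nat :=
  #|[set c : {ffun 'I_n.+1 -> Q} |
      [&& c ord0 == e,
          [forall j : 'I_n.+1, (j != ord0) ==>
               (qrun w (fun k => c (inord k)) j == c j)] &
          qrun w (fun k => c (inord k)) 0 == q]]|.

(* colours of arcs in a group, together with the product of the over-arc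
   colours (with signs) accumulated along each strand since its top. *)
Section GroupColorings.
Variable gT : finGroupType.

Definition gstep (c : nat -> gT * gT) (s : crossing) : nat -> gT * gT :=
  let i := s.1 in
  if s.2 then fun k => if k == i then ((c i.+1).1 ^ (c i).1, (c i.+1).2 * (c i).1)
                       else if k == i.+1 then c i else c k
  else fun k => if k == i then c i.+1
                else if k == i.+1 then ((c i).1 ^ ((c i.+1).1)^-1,
                                        (c i).2 * ((c i.+1).1)^-1)
                else c k.

Definition grun (w : seq crossing) (c : nat -> gT * gT) : nat -> gT * gT :=
  foldl gstep c w.

Definition ginit (n : nat) (c : {ffun 'I_n.+1 -> gT}) : nat -> gT * gT :=
  fun k => (c (inord k), 1).

(* c : arcs at the top of the braid -> G determines a homomorphism
   pi_K -> G with meridian (arc at top of position 0) |-> x iff all Wirtinger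
   relations of the closed diagram hold. *)
Definition is_Gcol (G : {set gT}) (x : gT) (n : nat) (w : seq crossing)
    (c : {ffun 'I_n.+1 -> gT}) : bool :=
  [&& c ord0 == x, [forall j, c j \in G] &
      [forall j : 'I_n.+1, ((grun w (ginit c)) j).1 == c j]].

(* image of the (preferred, linking-number 0) longitude: product of the signed
   over-arc colours met travelling once around the knot from the top of
   position 0, corrected by the meridian power minus the writhe. *)
Definition longitude (x : gT) (n : nat) (w : seq crossing)
    (c : {ffun 'I_n.+1 -> gT}) : gT :=
  let out := grun w (ginit c) in
  (\prod_(k < n.+1) (out (iter k.+1 (bperm w) 0)).2)
    * x ^+ count (fun s => ~~ s.2) w * x ^- count (fun s => s.2) w.

(* coefficient of g in P^x_G(K) = #{rho : rho(m_K) = x, rho(l_K) = g} *)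
Definition Pcoeff (G : {set gT}) (x : gT) (n : nat) (w : seq crossing) (g : gT)
  : nat :=
  #|[set c : {ffun 'I_n.+1 -> gT} | is_Gcol G x w c && (longitude x w c == g)]|.
End GroupColorings.

(* A colouring of the 1-tangle with top colour e gives, through
   a |-> R_a, a Wirtinger representation rho of the knot group in Inn(Q) with
   rho(meridian) = R_e, because R_(a*b) = R_a^(R_b).  Conversely every such rho
   comes from exactly one colouring: following the knot from the top, the arc
   reached after the word h of signed over-arc images must be coloured e h, and
   R_(e h) = R_e^h is indeed its image.  At the bottom, h is the longitude up to
   a power of R_e, which fixes e, so the bottom colour is e rho(l).  The
   longitude commutes with the meridian, and it lies in G' because all arc
   images are conjugate to R_e while the writhe correction cancels the exponent
   sum.  For GAlex(G0, f), each element of Inn(Q) acts on G0 as y |-> a(y) c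
   with a a power of f, so G' acts by right translations y |-> y c, i.e.
   freely; hence g |-> e g is injective on C(x) :&: G'. *)

From HB Require Import structures.
From mathcomp Require Import all_boot all_algebra all_fingroup all_solvable.
From mathcomp Require Import zify.
Set Implicit Arguments. Unset Strict Implicit. Unset Printing Implicit Defensive.
Local Open Scope group_scope.

Lemma swap_pos_l i : swap_pos i i = i.+1.
Proof. by rewrite /swap_pos eqxx. Qed.

Lemma swap_pos_r i : swap_pos i i.+1 = i.
Proof. by rewrite /swap_pos (gtn_eqF (ltnSn i)) eqxx. Qed.

Lemma swap_pos_out i k : k != i -> k != i.+1 -> swap_pos i k = k.
Proof. by rewrite /swap_pos => /negbTE -> /negbTE ->. Qed.

Lemma swap_posK i : involutive (swap_pos i).
Proof.
move=> k; have [->|ki] := eqVneq k i; first by rewrite swap_pos_l swap_pos_r.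
have [->|kSi] := eqVneq k i.+1; first by rewrite swap_pos_r swap_pos_l.
by rewrite !swap_pos_out.
Qed.

Fixpoint bperm_inv (w : seq crossing) (k : nat) : nat :=
  if w is s :: w' then swap_pos s.1 (bperm_inv w' k) else k.

Lemma bperm_cons s w k : bperm (s :: w) k = bperm w (swap_pos s.1 k).
Proof. by []. Qed.

Lemma bpermK w : cancel (bperm w) (bperm_inv w).
Proof. by elim: w => // s w IH k; rewrite bperm_cons /= IH swap_posK. Qed.

Lemma bperm_inj w : injective (bperm w).
Proof. exact: can_inj (bpermK w). Qed.

Lemma bperm_le n w k : valid_braid n w -> k <= n -> bperm w k <= n.
Proof.
elim: w k => // [[i b] w IH] k /andP[lin vw] kn; rewrite bperm_cons.
apply: IH => //; rewrite /swap_pos; case: ifP => _ //.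
by case: ifP => // _; exact: ltnW.
Qed.

Lemma inord0 n : (inord 0 : 'I_n.+1) = ord0.
Proof. by apply: val_inj; rewrite /= inordK. Qed.

Section KnotStrand.
Variables (n : nat) (w : seq crossing).
Hypothesis Kw : is_knot_braid n w.

Definition strand k := iter k (bperm w) 0.
Definition strands := [seq strand k | k <- iota 0 n.+1].

Lemma valid_knot_braid : valid_braid n w.
Proof. by case/andP: Kw. Qed.

Lemma strandS k : strand k.+1 = bperm w (strand k).
Proof. exact: iterS. Qed.

Lemma strand_le k : strand k <= n.
Proof. by elim: k => // k IH; rewrite strandS bperm_le // valid_knot_braid. Qed.

Lemma inord_strand k : (inord (strand k) : 'I_n.+1) = strand k :> nat.
Proof. by rewrite inordK // ltnS strand_le. Qed.

Lemma size_strands : size strands = n.+1.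
Proof. by rewrite size_map size_iota. Qed.

Lemma nth_strands k : k <= n -> nth 0 strands k = strand k.
Proof. by move=> kn; rewrite (nth_map 0) ?size_iota // nth_iota. Qed.

Lemma strands_uniq : uniq strands.
Proof. by case/andP: Kw. Qed.

Lemma strands_iota : strands =i iota 0 n.+1.
Proof.
have sub : {subset strands <= iota 0 n.+1}.
  by move=> j /mapP[k _ ->]; rewrite mem_iota add0n ltnS strand_le.
by case: (uniq_min_size strands_uniq sub); rewrite ?size_strands ?size_iota.
Qed.

Lemma strand_inj i j : i <= n -> j <= n -> strand i = strand j -> i = j.
Proof.
move=> i_n j_n E; apply/eqP; rewrite -(nth_uniq 0 _ _ strands_uniq) ?size_strands //.
by rewrite !nth_strands // E.
Qed.

Definition strand_index j := index j strands.

Lemma strand_indexK k : k <= n -> strand_index (strand k) = k.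
Proof.
by move=> kn; rewrite /strand_index -(nth_strands kn) index_uniq ?size_strands ?strands_uniq.
Qed.

Lemma strand_index_le j : j <= n -> strand_index j <= n.
Proof.
by move=> jn; rewrite -ltnS -size_strands index_mem strands_iota mem_iota ltnS.
Qed.

Lemma strand_indexE j : j <= n -> strand (strand_index j) = j.
Proof.
move=> jn; rewrite -nth_strands ?strand_index_le // nth_index //.
by rewrite strands_iota mem_iota ltnS.
Qed.

Lemma strand_period : strand n.+1 = 0.
Proof.
have := strand_indexE (strand_le n.+1).
case E: (strand_index (strand n.+1)) => [//|j]; rewrite !strandS => /bperm_inj.
have := strand_index_le (strand_le n.+1); rewrite E => jn /(strand_inj (ltnW jn)).
by move=> /(_ (leqnn n)) nj; rewrite nj ltnn in jn.
Qed.

Lemma strand_neq0 k : 0 < k <= n -> strand k != 0.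
Proof.
case/andP=> k0 kn; apply/eqP => /(@strand_inj k 0 kn (leq0n n)) k_0.
by rewrite k_0 in k0.
Qed.

Lemma perm_strandS : perm_eq [seq strand k.+1 | k <- iota 0 n.+1] (iota 0 n.+1).
Proof.
have -> : [seq strand k.+1 | k <- iota 0 n.+1] = seq.rot 1 strands.
  rewrite (map_comp strand succn) -(iotaDl 1 0) addn0 -(addn1 n).
  by rewrite iotaD map_cat /= add0n -strandS strand_period rot1_cons cats1.
by rewrite perm_rot; apply: uniq_perm strands_uniq (iota_uniq _ _) strands_iota.
Qed.

End KnotStrand.

Ltac case_pos k i :=
  let ki := fresh "ki" in let kSi := fresh "kSi" in
  case: (eqVneq k i) => [?|ki];
  [ subst k; rewrite ?eqxx ?swap_pos_l /=
  | case: (eqVneq k i.+1) => [?|kSi];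
    [ subst k; rewrite ?eqxx ?(gtn_eqF (ltnSn i)) ?swap_pos_r /=
    | rewrite ?(negbTE ki) ?(negbTE kSi) ?swap_pos_out //= ] ].

Section WirtingerRun.
Variable gT : finGroupType.
Implicit Types (cg : nat -> gT * gT) (w : seq crossing).

Lemma grun_cons s w cg : grun (s :: w) cg = grun w (gstep cg s).
Proof. by []. Qed.

Lemma grun_conj w cg (o : nat -> gT) :
    (forall k, (cg k).1 = o k ^ (cg k).2) ->
  forall k, (grun w cg k).1 = o (bperm_inv w k) ^ (grun w cg k).2.
Proof.
elim: w cg o => [|[i b] w IH] cg o Hcg //; rewrite grun_cons.
apply: (IH _ (fun k => o (swap_pos i k))) => k.
by rewrite /gstep /=; case: b; case_pos k i; rewrite ?Hcg ?conjgM.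
Qed.

Lemma grun_subgroup w cg (H : {group gT}) :
    (forall k, (cg k).1 \in H /\ (cg k).2 \in H) ->
  forall k, (grun w cg k).1 \in H /\ (grun w cg k).2 \in H.
Proof.
elim: w cg => [|[i b] w IH] cg Hcg //; rewrite grun_cons; apply: IH => k.
have [Hi1 Hi2] := Hcg i; have [HSi1 HSi2] := Hcg i.+1.
by rewrite /gstep /=; case: b; case_pos k i; rewrite ?groupJ ?groupM ?groupV.
Qed.

Fixpoint col_prod cg m := if m is m'.+1 then (cg m').1 * col_prod cg m' else 1.

Lemma eq_col_prod cg cg' m :
  (forall k, k < m -> (cg k).1 = (cg' k).1) -> col_prod cg m = col_prod cg' m.
Proof. by elim: m => //= m IH E; rewrite E // IH // => k /ltnW/E. Qed.

Lemma col_prodS cg m : col_prod cg m.+1 = col_prod (cg \o succn) m * (cg 0).1.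
Proof.
elim: m => [|m IH]; first by rewrite /= mulg1 mul1g.
by rewrite -[LHS]/((cg m.+1).1 * col_prod cg m.+1) IH mulgA.
Qed.

Lemma col_prod_gstep cg s m : s.1.+1 < m -> col_prod (gstep cg s) m = col_prod cg m.
Proof.
case: s => i b /=; elim: m => // m IH; rewrite ltnS leq_eqVlt => /orP[/eqP<- {IH}|lt].
  rewrite /= (@eq_col_prod _ cg i) => [|k ki]; last first.
    by rewrite /gstep /=; case: b; rewrite (ltn_eqF ki) (ltn_eqF (leqW ki)).
  rewrite /gstep /=; case: b; rewrite /= !eqxx (gtn_eqF (ltnSn i)) conjgE.
    by rewrite !mulgA mulgV mul1g.
  by rewrite invgK !mulgA mulgKV.
rewrite /= IH // {IH}; congr (_ * _).
by rewrite /gstep /=; case: b; rewrite (gtn_eqF lt) (gtn_eqF (ltnW lt)).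
Qed.

Lemma col_prod_grun n w cg : valid_braid n w -> col_prod (grun w cg) n.+1 = col_prod cg n.+1.
Proof.
elim: w cg => // [[i b] w IH] cg /andP[lin vw].
by rewrite grun_cons IH // col_prod_gstep.
Qed.

Lemma grun_relation0 n w cg : valid_braid n w ->
    (forall k, 0 < k <= n -> (grun w cg k).1 = (cg k).1) ->
  (grun w cg 0).1 = (cg 0).1.
Proof.
move=> vw E; have := col_prod_grun cg vw; rewrite !col_prodS.
by rewrite (@eq_col_prod _ (cg \o succn)) => [/mulgI|k kn] //; apply: E.
Qed.

End WirtingerRun.

(* Exponents of the images in the cyclic group <[X]>, o standing for #[X]:
   a negative crossing multiplies by X^-1 = X ^+ o.-1. *)
Definition exp_step (o : nat) (a : nat -> nat) (s : crossing) : nat -> nat :=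
  let i := s.1 in
  if s.2 then fun k => if k == i then (a i.+1).+1 else if k == i.+1 then a i else a k
  else fun k => if k == i then a i.+1 else if k == i.+1 then a i + o.-1 else a k.

Definition exp_run o w a := foldl (exp_step o) a w.

Lemma sum_exp_step o a s m : s.1.+1 < m ->
  (\sum_(0 <= k < m) exp_step o a s k =
   \sum_(0 <= k < m) a k + (if s.2 then 1 else o.-1))%N.
Proof.
case: s => i b /=; elim: m => // m IH; rewrite ltnS leq_eqVlt => /orP[/eqP<- {IH}|lt].
  rewrite !big_nat_recr //= (@eq_big_nat _ _ _ 0 i _ a) => [|k /andP[_ ki]].
    by rewrite /exp_step /=; case: b; rewrite /= !eqxx (gtn_eqF (ltnSn i)); lia.
  by rewrite /exp_step /=; case: b; rewrite (ltn_eqF ki) (ltn_eqF (leqW ki)).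
rewrite !big_nat_recr //= IH // {IH}.
by rewrite /exp_step /=; case: b; rewrite (gtn_eqF lt) (gtn_eqF (ltnW lt)); lia.
Qed.

Lemma sum_exp_run o n w a : valid_braid n w ->
  (\sum_(0 <= k < n.+1) exp_run o w a k =
   \sum_(0 <= k < n.+1) a k + count (fun s => s.2) w
     + count (fun s => ~~ s.2) w * o.-1)%N.
Proof.
elim: w a => [|[i b] w IH] a /=; first by rewrite !addn0.
move=> /andP[lin vw]; rewrite /exp_run /= -/(exp_run o w _) IH // sum_exp_step //.
by case: b => /=; lia.
Qed.

Section ExponentSum.
Variables (gT hT : finGroupType) (D : {group gT}) (nu : {morphism D >-> hT}) (X : hT).

Lemma grun_morph_exp w (cg : nat -> gT * gT) a :
    (forall k, [/\ (cg k).1 \in D, (cg k).2 \in D, nu (cg k).1 = X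
                 & nu (cg k).2 = X ^+ a k]) ->
  forall k, [/\ (grun w cg k).1 \in D, (grun w cg k).2 \in D,
                nu (grun w cg k).1 = X
              & nu (grun w cg k).2 = X ^+ exp_run #[X] w a k].
Proof.
elim: w cg a => [|[i b] w IH] cg a Hcg //; rewrite grun_cons; apply: IH => k.
have [Di1 Di2 nui1 nui2] := Hcg i; have [DSi1 DSi2 nuSi1 nuSi2] := Hcg i.+1.
rewrite /gstep /exp_step /=; case: b; case_pos k i; try exact: Hcg;
  split; rewrite ?groupJ ?groupM ?groupV ?morphJ ?morphM ?morphV ?groupV //;
  rewrite ?nui1 ?nui2 ?nuSi1 ?nuSi2 ?conjgE ?mulgA ?mulVg ?mul1g ?expgSr //.
  by rewrite invgK mulgK.
by rewrite expgD -invg_expg.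
Qed.

End ExponentSum.

Section Longitude.
Variables (gT : finGroupType) (n : nat) (w : seq crossing).
Hypothesis Kw : is_knot_braid n w.
Implicit Types (cg : {ffun 'I_n.+1 -> gT}) (x : gT).

Definition gout cg := grun w (ginit cg).
Definition strand_word cg k := (gout cg (strand w k.+1)).2.
Definition path_word cg m := \prod_(k < m) strand_word cg k.

Local Notation npos := (count (fun s : crossing => s.2) w).
Local Notation nneg := (count (fun s : crossing => ~~ s.2) w).

Lemma path_word0 cg : path_word cg 0 = 1.
Proof. exact: big_ord0. Qed.

Lemma path_wordS cg k : path_word cg k.+1 = path_word cg k * strand_word cg k.
Proof. exact: big_ord_recr. Qed.

Lemma longitudeE x cg : longitude x w cg = path_word cg n.+1 * x ^+ nneg * x ^- npos.
Proof. by []. Qed.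

Lemma gout_strandS cg k :
  (gout cg (strand w k.+1)).1 = cg (inord (strand w k)) ^ strand_word cg k.
Proof.
rewrite /strand_word strandS (@grun_conj _ _ _ (fun j => cg (inord j))) ?bpermK //.
by move=> j; rewrite conjg1.
Qed.

Lemma Gcol_strand G x cg : is_Gcol G x w cg ->
  forall k, cg (inord (strand w k)) = x ^ path_word cg k.
Proof.
case/and3P=> /eqP c0 _ /forallP rel; elim=> [|k IH].
  by rewrite path_word0 conjg1 /= inord0.
have /eqP := rel (inord (strand w k.+1)); rewrite (inord_strand Kw) => <-.
by rewrite gout_strandS IH path_wordS conjgM.
Qed.

Lemma path_word_mem (G : {group gT}) x cg : is_Gcol G x w cg ->
  forall m, path_word cg m \in G.
Proof.
case/and3P=> _ /forallP Gc _ m; apply: group_prod => k _.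
have init j : (ginit cg j).1 \in G /\ (ginit cg j).2 \in G by rewrite /= group1 Gc.
by case: (grun_subgroup w init (strand w k.+1)).
Qed.

Lemma Gcol_path_word_fix G x cg : is_Gcol G x w cg -> x ^ path_word cg n.+1 = x.
Proof.
move=> Gcg; rewrite -(Gcol_strand Gcg) (strand_period Kw) inord0.
by case/and3P: Gcg => /eqP.
Qed.

Lemma longitude_cent (G : {group gT}) x cg : is_Gcol G x w cg ->
  longitude x w cg \in 'C_G[x].
Proof.
move=> Gcg; have Gx : x \in G by case/and3P: Gcg => /eqP <- /forallP.
have fix_x := Gcol_path_word_fix Gcg.
rewrite inE longitudeE !groupM ?groupV ?groupX ?(path_word_mem Gcg) ?cent1id //=.
by apply/cent1P/commute_sym/commgP/conjg_fixP.
Qed.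

Section MeridianMorphism.
Variables (hT : finGroupType) (D : {group gT}) (nu : {morphism D >-> hT}).
Variables (x : gT) (cg : {ffun 'I_n.+1 -> gT}).
Hypotheses (Dx : x \in D) (Dcg : forall j, cg j \in D) (nu_cg : forall j, nu (cg j) = nu x).

Let ex := exp_run #[nu x] w (fun=> 0%N).

Lemma morph_strand_word k :
  strand_word cg k \in D /\ nu (strand_word cg k) = nu x ^+ ex (strand w k.+1).
Proof.
have init j : [/\ (ginit cg j).1 \in D, (ginit cg j).2 \in D, nu (ginit cg j).1 = nu x
                & nu (ginit cg j).2 = nu x ^+ 0].
  by rewrite /= group1 Dcg nu_cg morph1.
by case: (grun_morph_exp w init (strand w k.+1)).
Qed.

Lemma path_word_morph_mem : path_word cg n.+1 \in D.
Proof. by apply: group_prod => k _; case: (morph_strand_word k). Qed.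

Lemma morph_path_word : nu (path_word cg n.+1) = nu x ^+ (npos + nneg * #[nu x].-1).
Proof.
rewrite morph_prod => [|k _]; last by case: (morph_strand_word k).
under eq_bigr => k _ do rewrite (proj2 (morph_strand_word k)).
rewrite prodgXr -(big_mkord xpredT (fun k => ex (strand w k.+1))).
rewrite -(big_map (fun k => strand w k.+1) xpredT ex) (perm_big _ (perm_strandS Kw)).
by rewrite sum_exp_run ?valid_knot_braid // big1.
Qed.

Lemma morph_longitude : nu (longitude x w cg) = 1.
Proof.
have Dpw := path_word_morph_mem.
rewrite longitudeE !morphM ?morphV ?morphX ?groupM ?groupV ?groupX //.
rewrite morph_path_word -expgD -addnA -mulnSr prednK ?order_gt0 //.
by rewrite expgD mulnC expgM expg_order expg1n mulg1 mulgV.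
Qed.

End MeridianMorphism.

Lemma Gcol_conj G x cg : is_Gcol G x w cg ->
  forall j : 'I_n.+1, cg j = x ^ path_word cg (strand_index n w j).
Proof. by move=> Gcg j; rewrite -(Gcol_strand Gcg) strand_indexE ?inord_val ?leq_ord. Qed.

Lemma longitude_der (G : {group gT}) x cg : is_Gcol G x w cg ->
  longitude x w cg \in G^`(1).
Proof.
move=> Gcg; have NG := subsetP (der_norm 1 G).
have [Gx GL] : x \in G /\ longitude x w cg \in G.
  by case/setIP: (longitude_cent Gcg); case/and3P: Gcg => /eqP <- /forallP.
have Gc j : cg j \in G by case/and3P: Gcg => _ /forallP.
have coset_cg j : coset G^`(1) (cg j) = coset G^`(1) x.
  rewrite (Gcol_conj Gcg) conjg_mulR coset_morphM ?NG ?groupR ?(path_word_mem Gcg) //.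
  by rewrite [coset _ [~ _, _]]coset_id ?mulg1 // derg1 mem_commg ?(path_word_mem Gcg).
apply: coset_idr; first exact: NG.
exact: (morph_longitude (nu := coset_morphism _) (NG _ Gx) (fun j => NG _ (Gc j)) coset_cg).
Qed.
End Longitude.

Section InnerAutomorphisms.
Variable Q : quandle.
Implicit Types a b : Q.

Lemma RqE a y : Rq a y = qop y a.
Proof. by rewrite /Rq permE. Qed.

Lemma qrdivK a b : qop (qrdiv a b) b = a.
Proof. by rewrite /qrdiv -RqE permKV. Qed.

Lemma Rq_qop a b : Rq (qop a b) = Rq a ^ Rq b.
Proof.
apply/permP => z; rewrite conjgE !permM !RqE.
by rewrite qdist -/(qrdiv z b) qrdivK.
Qed.

Lemma Rq_qrdiv a b : Rq (qrdiv a b) = Rq a ^ (Rq b)^-1.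
Proof. by rewrite -{2}(qrdivK a b) Rq_qop conjgK. Qed.

Lemma Rq_Inn a : Rq a \in Inn Q.
Proof. by rewrite mem_gen // imset_f. Qed.

Lemma Rq_InnJ g a : g \in Inn Q -> Rq (g a) = Rq a ^ g.
Proof.
have RqJ_group : group_set [set g : {perm Q} | [forall a, Rq (g a) == Rq a ^ g]].
  apply/group_setP; split=> [|g1 g2]; rewrite !inE.
    by apply/forallP => a'; rewrite perm1 conjg1.
  move=> /forallP Hg1 /forallP Hg2; apply/forallP => a'.
  by rewrite permM (eqP (Hg2 _)) (eqP (Hg1 _)) conjgM.
suff /subsetP sInn : Inn Q \subset Group RqJ_group.
  by move=> /sInn; rewrite inE => /forallP/(_ a)/eqP.
rewrite gen_subG; apply/subsetP => _ /imsetP[b _ ->].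
by rewrite inE; apply/forallP => a'; rewrite RqE Rq_qop.
Qed.

Lemma Rq_cent_orbit e g : g \in 'C_(Inn Q)[Rq e] -> Rq (g e) = Rq e.
Proof. by case/setIP=> gI /cent1P ge; rewrite Rq_InnJ //; apply/conjg_fixP/commgP. Qed.

Lemma RqX_fix a b k : Rq b = Rq a -> (Rq a ^+ k) b = b.
Proof.
move=> Rba; elim: k => [|k IH]; first by rewrite expg0 perm1.
by rewrite expgSr permM IH -Rba RqE qidem.
Qed.

Lemma grun_Rq w (cq : nat -> Q) (cg : nat -> {perm Q} * {perm Q}) :
    (forall k, (cg k).1 = Rq (cq k)) ->
  forall k, (grun w cg k).1 = Rq (qrun w cq k).
Proof.
elim: w cq cg => [|[i b] w IH] cq cg Hcg //; rewrite grun_cons; apply: IH => k.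
by rewrite /gstep /qstep /=; case: b; case_pos k i; rewrite ?Rq_qop ?Rq_qrdiv ?Hcg.
Qed.

Lemma qrun_grun w (cq : nat -> Q) (cg : nat -> {perm Q} * {perm Q}) (o : nat -> Q) :
    (forall k, (cg k).1 = Rq (cq k)) -> (forall k, cq k = (cg k).2 (o k)) ->
  forall k, qrun w cq k = (grun w cg k).2 (o (bperm_inv w k)).
Proof.
elim: w cq cg o => [|[i b] w IH] cq cg o Hcg Hcq //; rewrite grun_cons.
apply: (IH _ _ (fun k => o (swap_pos i k))) => k.
  by rewrite /gstep /qstep /=; case: b; case_pos k i; rewrite ?Rq_qop ?Rq_qrdiv ?Hcg.
rewrite /gstep /qstep /=; case: b; case_pos k i; rewrite ?permM -?Hcg ?RqE -?Hcq //.
  by rewrite Hcg RqE.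
by rewrite /qrdiv Hcg.
Qed.

End InnerAutomorphisms.

Section Transport.
Variables (Q : quandle) (e : Q) (n : nat) (w : seq crossing).
Hypothesis Kw : is_knot_braid n w.
Implicit Types (c : {ffun 'I_n.+1 -> Q}) (cg : {ffun 'I_n.+1 -> {perm Q}}).

Definition qcol c : nat -> Q := fun k => c (inord k).
Definition Rcol c : {ffun 'I_n.+1 -> {perm Q}} := [ffun j => Rq (c j)].
Definition transport cg : {ffun 'I_n.+1 -> Q} :=
  [ffun j : 'I_n.+1 => path_word w cg (strand_index n w j) e].
Definition qcoloring c :=
  (c ord0 == e) && [forall j : 'I_n.+1, (j != ord0) ==> (qrun w (qcol c) j == c j)].
Local Notation Gcol := (is_Gcol (Inn Q) (Rq e) w).

Lemma qrun_strandS c k :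
  qrun w (qcol c) (strand w k.+1) = strand_word w (Rcol c) k (qcol c (strand w k)).
Proof.
rewrite /strand_word strandS (@qrun_grun _ _ _ (ginit (Rcol c)) (qcol c)) ?bpermK // => j.
  by rewrite /= ffunE.
by rewrite perm1.
Qed.

Lemma qcoloring_strand c : qcoloring c ->
  forall k, k <= n -> qcol c (strand w k) = path_word w (Rcol c) k e.
Proof.
case/andP=> /eqP c0 /forallP rel; elim=> [_|k IH kn].
  by rewrite path_word0 perm1 /qcol inord0.
have neq0 : (inord (strand w k.+1) : 'I_n.+1) != ord0.
  by rewrite -val_eqE -[\val _]/(nat_of_ord _) (inord_strand Kw) (strand_neq0 Kw).
have /implyP/(_ neq0)/eqP := rel (inord (strand w k.+1)); rewrite (inord_strand Kw).
by rewrite /qcol => <-; rewrite qrun_strandS IH ?(ltnW kn) // path_wordS permM.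
Qed.

Lemma qcoloring_bottom c : qcoloring c ->
  qrun w (qcol c) 0 = path_word w (Rcol c) n.+1 e.
Proof.
move=> qc; rewrite -(strand_period Kw) qrun_strandS qcoloring_strand //.
by rewrite path_wordS permM.
Qed.

Lemma transport_Rcol c : qcoloring c -> transport (Rcol c) = c.
Proof.
move=> qc; apply/ffunP => j; rewrite ffunE -qcoloring_strand ?strand_index_le ?leq_ord //.
by rewrite strand_indexE ?leq_ord // /qcol inord_val.
Qed.

Lemma Rcol_transport cg : Gcol cg -> Rcol (transport cg) = cg.
Proof.
move=> Gcg; apply/ffunP => j.
by rewrite !ffunE Rq_InnJ -?(Gcol_conj Kw Gcg) ?(path_word_mem Gcg).
Qed.

Lemma Rcol_Gcol c : qcoloring c -> Gcol (Rcol c).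
Proof.
case/andP=> c0 /forallP rel; apply/and3P; split.
- by rewrite ffunE (eqP c0).
- by apply/forallP => j; rewrite ffunE Rq_Inn.
have gq k : (grun w (ginit (Rcol c)) k).1 = Rq (qrun w (qcol c) k).
  by apply: grun_Rq => j; rewrite /= ffunE.
have rel' j : j != ord0 -> qrun w (qcol c) j = c j by move=> /(implyP (rel j))/eqP.
apply/forallP => j; apply/eqP; rewrite ffunE.
case: (eqVneq j ord0) => [->|/rel' <-]; last exact: gq.
rewrite (grun_relation0 (valid_knot_braid Kw)) /= ?ffunE ?inord0 // => k /andP[k0 kn].
by rewrite gq ffunE -rel' ?inordK // -val_eqE /= inordK // -lt0n.
Qed.

Lemma transport_qcoloring cg : Gcol cg -> qcoloring (transport cg).
Proof.
move=> Gcg; have si0 : strand_index n w 0 = 0 := strand_indexK Kw (leq0n n).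
apply/andP; split; first by rewrite ffunE /= si0 path_word0 perm1.
apply/forallP => j; apply/implyP => j0; have jn := leq_ord j.
have := strand_indexE Kw jn; case E: (strand_index n w j) => [|k] sj.
  by rewrite -val_eqE /= -sj in j0.
have kn : k < n by rewrite -E strand_index_le.
rewrite -[X in qrun _ _ X]sj qrun_strandS (Rcol_transport Gcg) /qcol !ffunE.
by rewrite (inord_strand Kw) (strand_indexK Kw (ltnW kn)) E path_wordS permM.
Qed.

Lemma longitude_Rq cg : Gcol cg -> longitude (Rq e) w cg e = path_word w cg n.+1 e.
Proof.
move=> Gcg; have Rq_bottom : Rq (path_word w cg n.+1 e) = Rq e.
  by rewrite Rq_InnJ ?(path_word_mem Gcg) ?(Gcol_path_word_fix Kw Gcg).
rewrite longitudeE !permM RqX_fix //.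
by apply: (canLR (permK _)); rewrite RqX_fix.
Qed.

Lemma Rcol_qcolorings q :
  [set cg | Gcol cg && (longitude (Rq e) w cg e == q)] =
  Rcol @: [set c | qcoloring c && (qrun w (qcol c) 0 == q)].
Proof.
apply/setP => cg; rewrite inE; apply/andP/imsetP => [[Gcg /eqP <-]|[c]].
  exists (transport cg); last by rewrite Rcol_transport.
  rewrite inE transport_qcoloring // qcoloring_bottom ?transport_qcoloring //.
  by rewrite /= Rcol_transport // longitude_Rq.
rewrite inE => /andP[qc /eqP <-] ->; have Gcg := Rcol_Gcol qc.
by rewrite longitude_Rq // -qcoloring_bottom.
Qed.

Lemma Rcol_inj : {in qcoloring &, injective Rcol}.
Proof. by move=> c1 c2 qc1 qc2 E; rewrite -(transport_Rcol qc1) E transport_Rcol. Qed.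

End Transport.

Lemma sum_card_fibers (A B : finType) (P : pred A) (L : A -> B) (F : pred B) :
  (\sum_(b | F b) #|[set a | P a && (L a == b)]| = #|[set a | P a && F (L a)]|)%N.
Proof.
rewrite -sum1_card (partition_big L F) /= => [|a]; last by rewrite inE => /andP[].
apply: eq_bigr => b Fb; rewrite -sum1_card; apply: eq_bigl => a; rewrite !inE.
by case: eqP => [->|]; rewrite ?andbT ?andbF ?Fb //; case: (P a).
Qed.

Theorem Psi_coeff_Pcoeff (Q : quandle) (e : Q) n w : is_knot_braid n w -> forall q,
  Psi_coeff n w e q =
  (\sum_(g in 'C_(Inn Q)[Rq e] :&: (Inn Q)^`(1) | g e == q) Pcoeff (Inn Q) (Rq e) n w g)%N.
Proof.
move=> Kw q; rewrite /Psi_coeff /Pcoeff sum_card_fibers.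
rewrite (@eq_card _ _
  [set cg | is_Gcol (Inn Q) (Rq e) w cg && (longitude (Rq e) w cg e == q)]).
  rewrite Rcol_qcolorings // card_in_imset => [|c1 c2]; last first.
    by rewrite !inE => /andP[qc1 _] /andP[qc2 _]; apply: (Rcol_inj Kw qc1 qc2).
  by apply: eq_card => c; rewrite !inE andbA.
move=> cg; rewrite inE [in RHS]inE; case Gcg: (is_Gcol _ _ _ _) => //=.
by rewrite in_setI (longitude_cent Kw Gcg) (longitude_der Kw Gcg).
Qed.

Section GeneralizedAlexander.
Variables (Q : quandle) (G0 : finGroupType) (f : {perm G0}) (phi : Q -> G0) (phinv : G0 -> Q).
Hypotheses (fA : f \in Aut [set: G0]) (phiK : cancel phi phinv) (phinvK : cancel phinv phi).
Hypothesis phi_qop : forall a b : Q, phi (qop a b) = f (phi a * (phi b)^-1) * phi b.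

Definition phi_conj (t : {perm Q}) (y : G0) : G0 := phi (t (phinv y)).
Definition affine_with (a : {perm G0}) (t : {perm Q}) :=
  forall y, phi_conj t y = a y * phi_conj t 1.

Lemma phi_conjM s t y : phi_conj (s * t) y = phi_conj t (phi_conj s y).
Proof. by rewrite /phi_conj permM phiK. Qed.

Lemma phi_conj1 y : phi_conj 1 y = y.
Proof. by rewrite /phi_conj perm1 phinvK. Qed.

Lemma cycle_aut_morph a : a \in <[f]> -> {morph a : x y / x * y} /\ a 1 = 1.
Proof.
move=> fa; have /Aut_morphic/morphicP aM : a \in Aut [set: G0].
  by apply: subsetP fa; rewrite cycle_subG.
have aMT x y : a (x * y) = a x * a y by apply: aM; rewrite inE.
by split=> //; apply: (@mulgI _ (a 1)); rewrite -aMT !mulg1.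
Qed.

Lemma affine_withM s t a b : a \in <[f]> -> b \in <[f]> ->
  affine_with a s -> affine_with b t -> affine_with (a * b) (s * t).
Proof.
move=> /cycle_aut_morph[_ a1] /cycle_aut_morph[bM b1] Hs Ht y.
by rewrite !phi_conjM Ht [in RHS]Ht Hs [in RHS]Hs !bM a1 b1 mul1g permM !mulgA.
Qed.

Lemma affine_with_Rq b : affine_with f (Rq b).
Proof.
have [fM f1] := cycle_aut_morph (cycle_id f).
by move=> y; rewrite /phi_conj !RqE !phi_qop !phinvK !fM f1 mul1g mulgA.
Qed.

Lemma affine_Inn t : t \in Inn Q -> exists2 a, a \in <[f]> & affine_with a t.
Proof.
pose A := [set t | [exists a in <[f]>, [forall y, phi_conj t y == a y * phi_conj t 1]]].
have affineP u : reflect (exists2 a, a \in <[f]> & affine_with a u) (u \in A).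
  rewrite inE; apply: (iffP exists_inP) => -[a fa Ha]; exists a => //.
    by move=> y; apply/eqP/(forallP Ha).
  by apply/forallP => y; rewrite Ha.
have A_group : group_set A.
  apply/group_setP; split=> [|u v /affineP[a fa Hu] /affineP[b fb Hv]]; apply/affineP.
    by exists 1; rewrite ?group1 // => y; rewrite !phi_conj1 perm1 mulg1.
  by exists (a * b); rewrite ?groupM //; apply: affine_withM.
suff /subsetP sA : Inn Q \subset Group A_group by move=> /sA/affineP.
rewrite gen_subG; apply/subsetP => _ /imsetP[b _ ->]; apply/affineP.
by exists f; [apply: cycle_id | apply: affine_with_Rq].
Qed.

Lemma affine_with_same a u v :
  affine_with a u -> affine_with a v -> affine_with 1 (v^-1 * u).
Proof.
move=> Hu Hv; suff key y : phi_conj (v^-1 * u) y = y * ((phi_conj v 1)^-1 * phi_conj u 1).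
  by move=> y; rewrite perm1 !key mul1g.
have : phi_conj v (phi_conj v^-1 y) = y by rewrite -phi_conjM mulVg phi_conj1.
by rewrite phi_conjM Hu Hv => /(canRL (mulgK _)) ->; rewrite mulgA.
Qed.

Lemma der_Inn_translation t : t \in (Inn Q)^`(1) -> affine_with 1 t.
Proof.
pose T := [set t | [forall y, phi_conj t y == y * phi_conj t 1]].
have translationP u : reflect (affine_with 1 u) (u \in T).
  rewrite inE; apply: (iffP forallP) => Hu y; first by rewrite perm1; apply/eqP.
  by rewrite Hu perm1.
have T_group : group_set T.
  apply/group_setP; split=> [|u v /translationP Hu /translationP Hv]; apply/translationP.
    by move=> y; rewrite !phi_conj1 perm1 mulg1.
  by rewrite -(mulg1 1); apply: affine_withM; rewrite ?group1.
suff /subsetP sT : (Inn Q)^`(1) \subset Group T_group by move=> /sT/translationP.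
rewrite derg1 gen_subG; apply/subsetP => _ /imset2P[u v uI vI ->]; apply/translationP.
have [[a fa Hu] [b fb Hv]] := (affine_Inn uI, affine_Inn vI).
have -> : [~ u, v] = (v * u)^-1 * (u * v) by rewrite invMg commgEl conjgE !mulgA.
apply: (@affine_with_same (a * b)); first exact: affine_withM.
by rewrite (centsP (cycle_abelian f)) //; apply: affine_withM.
Qed.

Lemma der_Inn_free t e : t \in (Inn Q)^`(1) -> t e = e -> t = 1.
Proof.
move=> /der_Inn_translation tT te.
have t1 : phi_conj t 1 = 1.
  by have := tT (phi e); rewrite perm1 {1}/phi_conj phiK te -{1}[phi e]mulg1 => /mulgI.
apply/permP => a; rewrite perm1; apply: (can_inj phiK).
by have := tT (phi a); rewrite t1 mulg1 perm1 /phi_conj phiK.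
Qed.

Lemma der_Inn_orbit_inj e :
  {in 'C_(Inn Q)[Rq e] :&: (Inn Q)^`(1) &, injective (fun g : {perm Q} => g e)}.
Proof.
move=> g1 g2 /setIP[_ d1] /setIP[_ d2] /= g12; apply/eqP; rewrite eq_mulgV1; apply/eqP.
by apply: (@der_Inn_free _ e); rewrite ?groupM ?groupV // permM g12 permK.
Qed.

Lemma Psi_coeff_orbit e n w : is_knot_braid n w ->
  forall g, g \in 'C_(Inn Q)[Rq e] :&: (Inn Q)^`(1) ->
  Psi_coeff n w e (g e) = Pcoeff (Inn Q) (Rq e) n w g.
Proof.
move=> Kw g gS; rewrite (Psi_coeff_Pcoeff _ Kw) (big_pred1 g) // => g'.
apply/andP/eqP => [[g'S /eqP]|->]; last by rewrite gS.
exact: der_Inn_orbit_inj.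
Qed.

End GeneralizedAlexander.

Theorem mainTheorem8 (Q : quandle) (G0 : finGroupType) (f : {perm G0})
    (phi : Q -> G0) :
  f \in Aut [set: G0] ->
  bijective phi ->
  (forall a b : Q, phi (qop a b) = (f (phi a * (phi b)^-1) * phi b)%g) ->
  qconnected Q ->
  forall e : Q,
  let G := Inn Q in
  let x := Rq e in
  (forall (n : nat) (w : seq crossing), is_knot_braid n w ->
     forall q : Q,
       Psi_coeff n w e q =
       (\sum_(g in ('C_G[x] :&: G^`(1))%g | g e == q) Pcoeff G x n w g)%N)
  /\
  (forall (n1 : nat) (w1 : seq crossing) (n2 : nat) (w2 : seq crossing),
     is_knot_braid n1 w1 -> is_knot_braid n2 w2 ->
     ((forall g, g \in ('C_G[x] :&: G^`(1))%g ->
                 Pcoeff G x n1 w1 g = Pcoeff G x n2 w2 g)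
      <->
      (forall q : Q, Rq q = x -> Psi_coeff n1 w1 e q = Psi_coeff n2 w2 e q))).
Proof.
move=> fA [phinv phiK phinvK] phi_qop _ e G x.
split=> [n w Kw q|n1 w1 n2 w2 Kw1 Kw2]; first exact: Psi_coeff_Pcoeff.
have orbit := Psi_coeff_orbit fA phiK phinvK phi_qop.
split=> [samePcoeff q _ | samePsi g gS].
  rewrite (Psi_coeff_Pcoeff _ Kw1) (Psi_coeff_Pcoeff _ Kw2).
  by apply: eq_bigr => g /andP[gS _]; apply: samePcoeff.
by rewrite -!orbit // samePsi // Rq_cent_orbit //; case/setIP: gS.
Qed.
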